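(* Let $n_r \ge 1$ and let $\mathcal{Q}^a \subseteq \mathbb{C}^{n_r}$ be a set of (angular channel) vectors. For $\boldsymbol{v}\in\mathbb{C}^{n_r}$ let its support vector $\boldsymbol{v}_s\in\{0,1\}^{n_r}$ be defined by $v_{s,i}=1$ if $v_i\neq 0$ and $v_{s,i}=0$ if $v_i=0$, and let $\mathcal{Q}^a_s=\{\boldsymbol{q}_s : \boldsymbol{q}\in\mathcal{Q}^a\}\subseteq\{0,1\}^{n_r}$. Assume $\mathcal{Q}^a_s$ satisfies the inclusion property: whenever $\boldsymbol{a}\in\mathcal{Q}^a_s$ and $\boldsymbol{b}\in\{0,1\}^{n_r}$ has its set of nonzero indices contained in that of $\boldsymbol{a}$, then $\boldsymbol{b}\in\mathcal{Q}^a_s$. Let $\boldsymbol{G}\in\{0,1\}^{m\times n_r}$ be a binary matrix such that the linear encoding map $\boldsymbol{s}\mapsto \boldsymbol{G}\boldsymbol{s}$ computed over $\mathbb{F}_2$ is injective on $\mathcal{Q}^a_s$. Regard $\boldsymbol{G}$ as a complex matrix with real entries $0,1$. Then for all $\boldsymbol{q}^a_1,\boldsymbol{q}^a_2\in\mathcal{Q}^a$ we have $\boldsymbol{q}^a_1\neq\boldsymbol{q}^a_2$ if and only if $\boldsymbol{G}\boldsymbol{q}^a_1\neq\boldsymbol{G}\boldsymbol{q}^a_2$.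
   Context: $\mathbb{F}_2$ denotes the field with two elements; a binary linear source code is given by a generator matrix $\boldsymbol{G}$ over $\mathbb{F}_2$, encoding $\boldsymbol{s}$ as $\boldsymbol{G}\boldsymbol{s}$ (mod 2). *)

(* Complex numbers: R[i] = complex R for an arbitrary real
   closed field R (covers C = complex over the reals). *)
From HB Require Import structures.
From mathcomp Require Import all_boot all_order all_algebra.
From mathcomp Require Import complex.
Set Implicit Arguments. Unset Strict Implicit. Unset Printing Implicit Defensive.
Import Order.TTheory GRing.Theory Num.Theory.
Local Open Scope ring_scope.

Definition supp_vec (C : numClosedFieldType) (nr : nat) (v : 'cV[C]_nr)
  : 'cV['F_2]_nr := \col_i ((v i 0 != 0)%:R).

Definition supp_set (C : numClosedFieldType) (nr : nat) (Q : 'cV[C]_nr -> Prop)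
  : 'cV['F_2]_nr -> Prop := fun b => exists q, Q q /\ supp_vec q = b.

Definition inclusion_property (nr : nat) (S : 'cV['F_2]_nr -> Prop) : Prop :=
  forall a b : 'cV['F_2]_nr, S a ->
    (forall i, b i 0 != 0 -> a i 0 != 0) -> S b.

Definition mx_F2 (m nr : nat) (G : 'M[bool]_(m, nr)) : 'M['F_2]_(m, nr) :=
  map_mx (fun b : bool => (b : nat)%:R) G.
Definition mx_C (C : numClosedFieldType) (m nr : nat) (G : 'M[bool]_(m, nr))
  : 'M[C]_(m, nr) := map_mx (fun b : bool => (b : nat)%:R) G.

Definition F2_injective_on (m nr : nat) (G : 'M[bool]_(m, nr))
  (S : 'cV['F_2]_nr -> Prop) : Prop :=
  forall a b, S a -> S b -> mx_F2 G *m a = mx_F2 G *m b -> a = b.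

From HB Require Import structures.
From mathcomp Require Import all_boot all_order all_algebra.
From mathcomp Require Import complex.
Import Order.TTheory GRing.Theory Num.Theory.
Set Implicit Arguments. Unset Strict Implicit. Unset Printing Implicit Defensive.
Local Open Scope ring_scope.

(* If G q1 = G q2 over C, then d = q1 - q2 is a kernel vector supported on
   U = supp q1 :|: supp q2.  Over F_2 the columns of G indexed by U are
   independent: a kernel vector y supported on U is ya + yb with ya the part of
   y on supp q1; both parts lie in Q_s by the inclusion property and
   G ya = G yb in characteristic 2, so ya = yb, and y = 2 ya = 0.  Independence
   of 0/1 columns over F_2 transfers to characteristic 0, because a minor that
   is nonsingular mod 2 has an odd, hence nonzero, integer determinant. *)

Definition colsupp (R : nmodType) n (v : 'cV[R]_n) : {set 'I_n} :=
  [set i | v i 0 != 0].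

Lemma colsuppB (R : zmodType) n (u v : 'cV[R]_n) :
  colsupp (u - v) \subset colsupp u :|: colsupp v.
Proof.
apply/subsetP => i; rewrite !inE !mxE; apply: contraTT.
by rewrite negb_or !negbK => /andP[/eqP-> /eqP->]; rewrite subrr.
Qed.

Lemma colsupp_supp_vec (C : numClosedFieldType) n (q : 'cV[C]_n) :
  colsupp (supp_vec q) = colsupp q.
Proof. by apply/setP => i; rewrite !inE mxE; case: (q i 0 != 0); rewrite ?oner_eq0. Qed.

Definition coord_proj_mx {R : nzSemiRingType} n (V : {set 'I_n}) : 'M[R]_n :=
  diag_mx (\row_i (i \in V)%:R).

Lemma coord_proj_mx_eq0 (R : nzRingType) n (V : {set 'I_n}) (x : 'cV[R]_n) :
  (coord_proj_mx V *m x == 0) = (colsupp x \subset ~: V).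
Proof.
rewrite mul_diag_mx; apply/eqP/subsetP => [/matrixP x0 i | xV].
  rewrite inE in_setC; apply: contra => iV.
  by move: (x0 i 0); rewrite !mxE; case: (i \in V) iV => // _; rewrite mul1r => ->.
apply/matrixP => i j; rewrite (ord1 j) !mxE.
case iV: (i \in V); rewrite ?mul0r ?mul1r //; apply/eqP; apply: contraTT iV => xi.
by have := xV i; rewrite !inE => /(_ xi).
Qed.

Lemma map_coord_proj_mx (R S : nzRingType) (f : {rmorphism R -> S}) n (V : {set 'I_n}) :
  map_mx f (coord_proj_mx V) = coord_proj_mx V.
Proof.
rewrite /coord_proj_mx map_diag_mx; congr diag_mx.
by apply/rowP => i; rewrite !mxE rmorph_nat.
Qed.

Lemma row_free_trP (F : fieldType) m n (A : 'M[F]_(m, n)) :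
  reflect (forall x : 'cV_n, A *m x = 0 -> x = 0) (row_free A^T).
Proof.
apply: (iffP idP) => [freeA x Ax | kerA].
  by apply/trmx_inj/eqP; rewrite trmx0 -(mulmx_free_eq0 _ freeA) -trmx_mul Ax trmx0.
apply: inj_row_free => v vA; apply/trmx_inj; rewrite trmx0; apply: kerA.
by rewrite -[A]trmxK -trmx_mul vA trmx0.
Qed.

Lemma row_free_map_int (K : fieldType) (F : numFieldType) m n (M : 'M[int]_(m, n)) :
  row_free (map_mx intr M : 'M[K]_(m, n)) -> row_free (map_mx intr M : 'M[F]_(m, n)).
Proof.
move=> freeK.
have fullK : row_full (map_mx intr M : 'M[K]_(m, n))^T by rewrite /row_full mxrank_tr.
have [h unitK] : exists h, rowsub h (map_mx intr M : 'M[K]_(m, n))^T \in unitmx.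
  by exists (fullrankfun fullK); apply: fullrowsub_unit.
have mapN (R : nzRingType) :
    rowsub h (map_mx intr M : 'M[R]_(m, n))^T = map_mx intr (rowsub h M^T).
  by rewrite map_mxsub map_trmx.
have detN : \det (rowsub h M^T) != 0.
  move: unitK; rewrite mapN unitmxE det_map_mx unitfE.
  by apply: contraNneq => ->; rewrite rmorph0.
have unitF : rowsub h (map_mx intr M : 'M[F]_(m, n))^T \in unitmx.
  by rewrite mapN unitmxE det_map_mx unitfE intr_eq0.
apply/eqP/anti_leq; rewrite rank_leq_row -mxrank_tr.
by rewrite -[X in (X <= _)%N](mxrank_unit unitF) mxrankS ?rowsub_sub.
Qed.

Lemma int_mx_ker_on_eq0 (K : fieldType) (F : numFieldType) m n
    (M : 'M[int]_(m, n)) (U : {set 'I_n}) :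
  (forall y : 'cV[K]_n, colsupp y \subset U -> map_mx intr M *m y = 0 -> y = 0) ->
  forall x : 'cV[F]_n, colsupp x \subset U -> map_mx intr M *m x = 0 -> x = 0.
Proof.
move=> kerK.
(* Stacking the projection onto the coordinates outside U below M turns the
   support constraint into part of the kernel condition. *)
pose MU := col_mx M (coord_proj_mx (~: U)).
have kerMU (R : nzRingType) (x : 'cV[R]_n) :
    (map_mx intr MU *m x == 0) = (map_mx intr M *m x == 0) && (colsupp x \subset U).
  by rewrite map_col_mx mul_col_mx col_mx_eq0 map_coord_proj_mx coord_proj_mx_eq0 setCK.
have freeK : row_free (map_mx intr MU^T : 'M[K]_(n, m + n)).
  rewrite -map_trmx; apply/row_free_trP => y /eqP; rewrite kerMU => /andP[/eqP My yU].
  exact: kerK.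
move=> x xU Mx; have := row_free_map_int F freeK.
rewrite -map_trmx => /row_free_trP; apply; apply/eqP.
by rewrite kerMU Mx eqxx.
Qed.

Lemma map_bool_mx_intr (R : nzRingType) m n (G : 'M[bool]_(m, n)) :
  map_mx (fun b : bool => (b : nat)%:R) G
  = map_mx intr (map_mx (fun b : bool => (b : nat)%:Z) G) :> 'M[R]_(m, n).
Proof. by rewrite -map_mx_comp; apply: eq_map_mx => -[]. Qed.

Lemma oppmx_F2 m n (A : 'M['F_2]_(m, n)) : - A = A.
Proof. by apply/matrixP => i j; rewrite mxE oppr_pchar2 // pchar_Fp. Qed.

Lemma F2_ker_on_supp_union m n (G : 'M[bool]_(m, n)) (S : 'cV['F_2]_n -> Prop) a b :
  inclusion_property S -> F2_injective_on G S -> S a -> S b ->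
  forall y, colsupp y \subset colsupp a :|: colsupp b -> mx_F2 G *m y = 0 -> y = 0.
Proof.
move=> inclS injG Sa Sb y ysupp Gy.
pose ya := \col_i (if i \in colsupp a then y i 0 else 0).
pose yb := y - ya.
have Sya : S ya.
  by apply: (inclS _ _ Sa) => i; rewrite !mxE; case: ifP; rewrite ?eqxx // inE.
have Syb : S yb.
  apply: (inclS _ _ Sb) => i; rewrite !mxE; case: ifP => [_ | ia]; first by rewrite subrr eqxx.
  rewrite subr0 => yi; have /(subsetP ysupp) : i \in colsupp y by rewrite inE.
  by rewrite in_setU ia inE.
have eq_ab : ya = yb.
  by apply: injG => //; rewrite mulmxBr Gy sub0r -mulmxN oppmx_F2.
by rewrite -(subrK ya y) -/yb -eq_ab -{1}(oppmx_F2 ya) addNr.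
Qed.

Theorem theorem1 (R : rcfType) (nr m : nat) (Q : 'cV[R[i]]_nr -> Prop)
  (G : 'M[bool]_(m, nr)) :
  (0 < nr)%N ->
  inclusion_property (supp_set Q) ->
  F2_injective_on G (supp_set Q) ->
  forall q1 q2 : 'cV[R[i]]_nr, Q q1 -> Q q2 ->
    (q1 != q2 <-> mx_C R[i] G *m q1 != mx_C R[i] G *m q2).
Proof.
move=> _ inclQ injG q1 q2 Q1 Q2; split; last by apply: contra_neq => ->.
apply: contra_neq => Gq; apply: subr0_eq.
have S1 : supp_set Q (supp_vec q1) by exists q1.
have S2 : supp_set Q (supp_vec q2) by exists q2.
have kerF2 := F2_ker_on_supp_union inclQ injG S1 S2.
rewrite !colsupp_supp_vec /mx_F2 map_bool_mx_intr in kerF2.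
apply: (int_mx_ker_on_eq0 kerF2); first exact: colsuppB.
by rewrite -map_bool_mx_intr mulmxBr Gq subrr.
Qed.
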